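(* Let $g$ be a continuous $g$-function on $X=A^{\mathbb{N}}$ and let $\mu$ be a compatible $g$-measure. For each $\ell\in\mathbb{N}$ let $\mu_\ell$ be the canonical $\ell$-step Markov approximation to $\mu$. Then $\mu_\ell\to\mu$ as $\ell\to\infty$ in the projective distance $\rho$; moreover \[ \rho(\mu_\ell,\mu)\le \operatorname{var}_\ell(\log\circ g)\quad\text{for all }\ell\in\mathbb{N}. \]
   Context: $A$ is a finite alphabet, $X=A^{\mathbb{N}}$ with product topology, $T$ the left shift, $\pmb{x}_n^m=x_nx_{n+1}\cdots x_m$, and $[\pmb{a}]=\{\pmb{x}: \pmb{x}_1^n=\pmb{a}\}$ for $\pmb{a}\in A^n$. $\mathcal{M}^+(X)$ is the set of Borel probability measures giving positive mass to every cylinder. Projective distance: $\rho(\mu,\nu)=\sup_{n}\max_{\pmb{a}\in A^n}\frac1n|\log(\mu[\pmb{a}]/\nu[\pmb{a}])|$. A $g$-function is a Borel function $g:X\to(0,1)$ with $\sum_{a\in A}g(a x_2x_3\cdots)=1$ for all $\pmb{x}\in X$. A compatible $g$-measure is a $T$-invariant $\mu\in\mathcal{M}^+(X)$ such that $\lim_{n\to\infty}\mu[a_1\pmb{a}_2^n]/\mu[\pmb{a}_2^n]=g(\pmb{a})$ for all $\pmb{a}\in X$. The canonical $\ell$-step Markov approximation $\mu_\ell$ is the measure with $\mu_\ell[\pmb{a}_1^n]=\mu[\pmb{a}_1^n]$ for $n\le \ell$ and $\mu_\ell[\pmb{a}_1^n]=\mu[\pmb{a}_1^\ell]\prod_{j=1}^{n-\ell}\mu[\pmb{a}_j^{j+\ell}]/\mu[\pmb{a}_j^{j+\ell-1}]$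 for $n\ge\ell$. For $\phi:X\to\mathbb{R}$, $\operatorname{var}_\ell\phi=\max_{\pmb{a}\in A^\ell}\{\sup_{\pmb{x}\in[\pmb{a}]}\phi(\pmb{x})-\inf_{\pmb{x}\in[\pmb{a}]}\phi(\pmb{x})\}$. *)

From HB Require Import structures.
From mathcomp Require Import all_boot all_order all_algebra.
From mathcomp Require Import all_classical all_reals all_analysis.
Set Implicit Arguments. Unset Strict Implicit. Unset Printing Implicit Defensive.
Import Order.TTheory GRing.Theory Num.Theory.
Import numFieldNormedType.Exports.
Local Open Scope classical_set_scope.
Local Open Scope ring_scope.

#[short(type="finPointedType")]
HB.structure Definition FinPointed := {T of Finite T & isPointed T}.

(* X = A^N with the product topology of the discrete topology on A.
   Coordinate x_{i+1} of the paper is [x i] here. *)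
Definition Xt (A : finPointedType) : topologicalType :=
  prod_topology (fun _ : nat => discrete_topology A).

Definition XB (A : finPointedType) := g_sigma_algebraType (@open (Xt A)).

Definition shift (A : finPointedType) (x : Xt A) : Xt A := fun n => x n.+1.

Definition scons (A : finPointedType) (a : A) (x : Xt A) : Xt A :=
  fun n => if n is k.+1 then x k else a.

Definition prefix (A : finPointedType) (x : Xt A) (n : nat) : seq A := mkseq x n.

Definition cyl (A : finPointedType) (a : seq A) : set (Xt A) :=
  [set x | prefix x (size a) = a].

Definition mass (R : realType) (A : finPointedType) (mu : probability (XB A) R)
  (a : seq A) : R := fine (mu (cyl a : set (XB A))).

Definition positive_on_cylinders (R : realType) (A : finPointedType)
  (mu : probability (XB A) R) : Prop :=
  forall a : seq A, (0 < mu (cyl a : set (XB A)))%E.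

Definition shift_invariant (R : realType) (A : finPointedType)
  (mu : probability (XB A) R) : Prop :=
  forall B : set (XB A), measurable B ->
    mu ((@shift A : XB A -> XB A) @^-1` B) = mu B.

Definition g_function (R : realType) (A : finPointedType) (g : Xt A -> R) : Prop :=
  [/\ measurable_fun [set: XB A] (g : XB A -> R),
      (forall x, 0 < g x < 1) &
      (forall x, \sum_(a : A) g (scons a (shift x)) = 1)].

Definition compatible_g_measure (R : realType) (A : finPointedType)
  (g : Xt A -> R) (mu : probability (XB A) R) : Prop :=
  [/\ shift_invariant mu, positive_on_cylinders mu &
      forall x : Xt A,
        (fun n => mass mu (prefix x n.+1) / mass mu (prefix (shift x) n))
          @ \oo --> g x].

(* Cylinder values of the canonical l-step Markov approximation of the
   cylinder function p (p a = mu[a]). *)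
Definition markov_approx (R : realType) (A : finPointedType) (p : seq A -> R)
  (l : nat) (a : seq A) : R :=
  if (size a <= l)%N then p a
  else p (take l a) *
       \prod_(0 <= j < size a - l)
          (p (take l.+1 (drop j a)) / p (take l (drop j a))).

Definition rho (R : realType) (A : finPointedType) (p q : seq A -> R) : \bar R :=
  ereal_sup [set ((`|ln (p a / q a)| / (size a)%:R)%:E) | a in
               [set a : seq A | (0 < size a)%N]].

Definition var (R : realType) (A : finPointedType) (l : nat) (phi : Xt A -> R) : R :=
  \big[Num.max/0]_(a : l.-tuple A)
     (sup (phi @` cyl (a : seq A)) - inf (phi @` cyl (a : seq A))).

From Pilot Require Import Defs.
From HB Require Import structures.
From mathcomp Require Import all_boot all_order all_algebra.
From mathcomp Require Import all_classical all_reals all_analysis.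
Import Order.TTheory GRing.Theory Num.Theory.
Import numFieldNormedType.Exports.
Local Open Scope classical_set_scope.
Local Open Scope ring_scope.
Set Implicit Arguments. Unset Strict Implicit. Unset Printing Implicit Defensive.
From mathcomp Require Import lra ring zify.

(* Compatibility makes the conditional mass mu[c v] / mu[v] converge to g along every point
   of [c v]. As masses are additive over one-letter extensions, a conditional mass above
   (or below) the values of g on [c v] would propagate down an infinite branch of the tree
   of words (König), contradicting this convergence; hence log (mu[c v] / mu[v]) lies between
   the inf and the sup of log g over any cylinder containing [c v]. Telescoping writes
   mu_l[a] / mu[a] as a product, over j < |a| - l, of quotients of two such conditional
   masses whose cylinders both lie in [a_(j+1) ... a_(j+l)], so each logarithmic factor is
   at most var_l (log g), which gives rho (mu_l, mu) <= var_l (log g). Another König argument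
   makes continuous functions on A^N uniformly continuous along cylinders, so
   var_l (log g) tends to 0. *)

Local Notation prefix := Defs.prefix.

Section Cylinders.
Variable A : finPointedType.
Implicit Types (v w : seq A) (x y : Xt A).

Lemma size_prefix x n : size (prefix x n) = n.
Proof. exact: size_mkseq. Qed.

Lemma nth_prefix x n i : (i < n)%N -> nth point (prefix x n) i = x i.
Proof. exact: nth_mkseq. Qed.

Lemma cylP w x : cyl w x <-> (forall i, (i < size w)%N -> x i = nth point w i).
Proof.
split=> [<- i|xw]; first by rewrite size_prefix => /nth_prefix.
apply: (@eq_from_nth _ point); rewrite size_prefix // => i ilt.
by rewrite nth_prefix // xw.
Qed.

Lemma cyl_prefix x n : cyl (prefix x n) x.
Proof. by apply/cylP => i; rewrite size_prefix => /nth_prefix. Qed.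

Lemma cyl_take w n : cyl w `<=` cyl (take n w).
Proof.
move=> x /cylP xw; apply/cylP => i; rewrite size_take_min leq_min => /andP[ltin ltiw].
by rewrite nth_take // xw.
Qed.

Lemma cyl_rcons w c : cyl (rcons w c) = cyl w `&` [set x | x (size w) = c].
Proof.
apply/seteqP; split=> x.
  move=> /cylP xwc; split=> /=; last by rewrite xwc ?size_rcons // nth_rcons ltnn eqxx.
  by apply/cylP => i ltiw; rewrite xwc ?size_rcons 1?ltnW // nth_rcons ltiw.
case=> /cylP xw xc; apply/cylP => i; rewrite size_rcons ltnS leq_eqVlt.
by case/orP => [/eqP ->|ltiw]; rewrite nth_rcons ?ltnn ?eqxx // ltiw xw.
Qed.

Lemma open_cyl w : open (cyl w).
Proof.
elim/last_ind: w => [|w c ow].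
  rewrite (_ : cyl _ = setT); first exact: openT.
  by apply/seteqP; split=> x // _; apply/cylP.
rewrite cyl_rcons; apply: openI => //.
have cproj := @proj_continuous nat (fun=> discrete_topology A) (size w).
exact: (@continuousP (Xt A) _ (fun x => x (size w))).1 cproj [set c] (discrete_open _).
Qed.

Lemma measurable_cyl w : measurable (cyl w : set (XB A)).
Proof. by apply: sub_gen_smallest; exact: open_cyl. Qed.

Lemma prefix_scons c y n : prefix (scons c y) n.+1 = c :: prefix y n.
Proof. by rewrite /prefix /mkseq /= -[1%N]addn0 iotaDl -map_comp. Qed.

Lemma cyl_scons c v y : cyl v y -> cyl (c :: v) (scons c y).
Proof. by rewrite /cyl /= prefix_scons => ->. Qed.

Lemma cvg_of_cyl_prefix x (Y : nat -> Xt A) :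
  (forall n, cyl (prefix x n) (Y n)) -> Y @ \oo --> x.
Proof.
move=> Yx; apply/cvg_sup => i U [V] [[W] oW <-] WxV VU.
apply: (filterS VU); exists i.+1 => // n /= ltin.
have /cylP := Yx n; rewrite size_prefix => /(_ i ltin).
by rewrite nth_prefix // => ->.
Qed.

End Cylinders.

Section Konig.
Variable A : finPointedType.

Lemma konig_path (P : seq A -> Prop) (w0 : seq A) :
  P w0 -> (forall w, P w -> exists c, P (rcons w c)) ->
  exists x : Xt A, forall k, P (prefix x (size w0 + k)).
Proof.
move=> Pw0 Pext.
pose next w := if pselect (exists c, P (rcons w c)) is left e then projT1 (cid e)
               else point.
have Pnext w : P w -> P (rcons w (next w)).
  rewrite /next => Pw; case: pselect => [e|]; first exact: projT2 (cid e).
  by move/(_ (Pext w Pw)).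
pose W k := iter k (fun w => rcons w (next w)) w0.
have PW k : P (W k) by elim: k => //= k; exact: Pnext.
have sizeW k : size (W k) = (size w0 + k)%N.
  by elim: k => [|k IHk] /=; rewrite ?addn0 // size_rcons IHk addnS.
have nthW k m i : (i < size (W k))%N -> (k <= m)%N -> nth point (W m) i = nth point (W k) i.
  move=> ltik /subnK <-; elim: (m - k)%N => //= j IHj.
  by rewrite nth_rcons sizeW ifT //; move: ltik; rewrite sizeW; lia.
exists (fun i => nth point (W i.+1) i) => k.
suff -> : prefix (fun i => nth point (W i.+1) i) (size w0 + k) = W k by exact: PW.
apply: (@eq_from_nth _ point); first by rewrite size_prefix sizeW.
move=> i; rewrite size_prefix => ltik; rewrite nth_prefix //.
rewrite -(nthW i.+1 (maxn i.+1 k)) ?leq_maxl ?sizeW ?addnS ?ltnS ?leq_addl //.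
by rewrite (nthW k (maxn i.+1 k)) ?leq_maxr ?sizeW.
Qed.

Lemma konig_prefix_closed (B : seq A -> Prop) :
  (forall w n, B w -> B (take n w)) -> (forall n, exists2 w, size w = n & B w) ->
  exists x : Xt A, forall n, B (prefix x n).
Proof.
move=> B_take B_size.
pose P w := forall k, exists2 u : seq A, size u = k & B (w ++ u).
have Pext w : P w -> exists c, P (rcons w c).
  move=> Pw; apply/not_existsP => noPc.
  have noB c : exists k, forall u, size u = k -> ~ B (rcons w c ++ u).
    have /existsNP[k noPk] := noPc c.
    by exists k => u su Bu; apply: noPk; exists u.
  have [K BK] := choice noB.
  have [[//|c u] /= [su] /(B_take _ (size w + (K c).+1))] := Pw (\max_(c : A) K c).+1.
  rewrite take_cat ltnNge leq_addr /= addKn /= -cat_rcons; apply: BK.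
  by rewrite size_takel // su leq_bigmax.
have [x Px] := @konig_path P [::] B_size Pext.
by exists x => n; have [[|//] _] := Px n 0%N; rewrite cats0.
Qed.

End Konig.

Section Mass.
Variables (R : realType) (A : finPointedType) (mu : probability (XB A) R).
Implicit Types (w : seq A).

Lemma mass_fin_num w : mu (cyl w : set (XB A)) \is a fin_num.
Proof.
rewrite ge0_fin_numE //; apply: le_lt_trans (probability_le1 mu (measurable_cyl w)) _.
exact: ltey.
Qed.

Lemma mass_gt0 w : positive_on_cylinders mu -> 0 < mass mu w.
Proof.
by move=> mupos; apply: fine_gt0; rewrite mupos -ge0_fin_numE // mass_fin_num.
Qed.

Lemma mass_sum_rcons w : mass mu w = \sum_(c : A) mass mu (rcons w c).
Proof.
have cylE : cyl w = \bigcup_(c in [set: A]) cyl (rcons w c).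
  apply/seteqP; split=> [x xw|x [c _]]; last by rewrite cyl_rcons => -[].
  by exists (x (size w)) => //; rewrite cyl_rcons.
rewrite /mass sum_fine => [|c _]; last exact: mass_fin_num.
congr fine; rewrite [in LHS]cylE measure_fin_bigcup //.
- rewrite (fsbigE (index_enum A)) ?index_enum_uniq // => [|c _]; last first.
    by rewrite mem_index_enum.
  by under eq_bigl => c do rewrite in_setT.
- exact: (@finite_finset A).
- apply/trivIsetP => c d _ _ cd; apply/seteqP; split=> x //.
  by rewrite !cyl_rcons => -[[_ xc] [_ xd]]; move: cd; rewrite -xc -xd eqxx.
- by move=> c _; exact: measurable_cyl.
Qed.

End Mass.

Section RatioLimit.
Variables (R : realType) (A : finPointedType) (h : seq A -> R).
Hypothesis h_sum : forall w, h w = \sum_(c : A) h (rcons w c).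
Hypothesis h_gt0 : forall w, 0 < h w.

Lemma le_of_ratio_cvg (f : seq A -> R) (G : Xt A -> R) (v : seq A) (U : R) :
  (forall w, f w = \sum_(c : A) f (rcons w c)) ->
  (forall y, cyl v y -> (fun n => f (prefix y n) / h (prefix y n)) @ \oo --> G y) ->
  (forall y, cyl v y -> G y <= U) -> f v <= U * h v.
Proof.
move=> f_sum fh_cvg GU; apply/ler_addgt0Pr => e e_gt0.
rewrite -[e](divfK (lt0r_neq0 (h_gt0 v))) -mulrDl leNgt; apply/negP => bad.
set U' := U + e / h v.
pose P w := [/\ (size v <= size w)%N, take (size v) w = v & U' * h w < f w].
have Pext w : P w -> exists c, P (rcons w c).
  move=> [vw wv Uw]; apply/not_existsP => noP; move: Uw.
  rewrite f_sum h_sum mulr_sumr ltNge => /negP; apply; apply: ler_sum => c _.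
  rewrite leNgt; apply/negP => Uwc; apply: (noP c); split => //.
    by rewrite size_rcons ltnW.
  by rewrite -cats1 takel_cat.
have [x Px] := @konig_path _ P v (And3 (leqnn _) (take_size _) bad) Pext.
have xv : cyl v x.
  by case: (Px 0%N) => _; rewrite addn0 -{1}(size_prefix x (size v)) take_size.
have GU' : G x < U' by rewrite (le_lt_trans (GU x xv)) // ltrDl divr_gt0.
have [N _ ltN] := cvgr_lt _ (fh_cvg x xv) _ GU'.
have [_ _] := Px N; rewrite -ltr_pdivlMr // => /lt_trans/(_ (ltN _ (leq_addl _ _))).
by rewrite ltxx.
Qed.

Lemma ge_of_ratio_cvg (f : seq A -> R) (G : Xt A -> R) (v : seq A) (L : R) :
  (forall w, f w = \sum_(c : A) f (rcons w c)) ->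
  (forall y, cyl v y -> (fun n => f (prefix y n) / h (prefix y n)) @ \oo --> G y) ->
  (forall y, cyl v y -> L <= G y) -> L * h v <= f v.
Proof.
move=> f_sum fh_cvg LG; rewrite -lerN2 -mulNr.
apply: (le_of_ratio_cvg (f := fun w => - f w) (G := fun y => - G y)).
- by move=> w; rewrite f_sum sumrN.
- by move=> y /fh_cvg fh_y; under eq_fun do rewrite mulNr; exact: cvgN.
- by move=> y /LG; rewrite lerN2.
Qed.

End RatioLimit.

Section Oscillation.
Variables (R : realType) (A : finPointedType) (phi : Xt A -> R).

Definition osc_le (e : R) (w : seq A) :=
  forall y z, cyl w y -> cyl w z -> `|phi y - phi z| <= e.

Lemma osc_le_take e w n : osc_le e (take n w) -> osc_le e w.
Proof. by move=> osc y z /(@cyl_take _ _ n) wy /(@cyl_take _ _ n) wz; exact: osc. Qed.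

Lemma continuous_osc_le : continuous phi ->
  forall e, 0 < e -> exists l, forall w, size w = l -> osc_le e w.
Proof.
move=> phi_cont e e_gt0; apply: contrapT => /forallNP no_l.
have [x bad] : exists x : Xt A, forall n, ~ osc_le e (prefix x n).
  apply: (@konig_prefix_closed _ (fun w => ~ osc_le e w)) => [w n bad_w /osc_le_take //|l].
  by have /existsNP[w /not_implyP[sw bad_w]] := no_l l; exists w.
have far_pair n : exists yz : Xt A * Xt A,
    [/\ cyl (prefix x n) yz.1, cyl (prefix x n) yz.2 & e < `|phi yz.1 - phi yz.2|].
  apply: contrapT => /forallNP no_yz; apply: (bad n) => y z xy xz.
  by rewrite leNgt; apply/negP => lt_e; apply: (no_yz (y, z)).
have [YZ YZ_bad] := choice far_pair.
have phi_cvg (Y : nat -> Xt A) : (forall n, cyl (prefix x n) (Y n)) ->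
    (phi \o Y) @ \oo --> phi x.
  by move=> xY; apply: continuous_cvg; [exact: phi_cont | exact: cvg_of_cyl_prefix].
have diff_cvg : (fun n => phi (YZ n).1 - phi (YZ n).2) @ \oo --> 0.
  rewrite -(subrr (phi x)); apply: cvgB; apply: phi_cvg => n; by case: (YZ_bad n).
have [N _ /(_ N (leqnn N))] := (cvgrPdist_lt _ _).1 diff_cvg e e_gt0.
by case: (YZ_bad N) => _ _; rewrite /= sub0r normrN => /lt_trans h /h; rewrite ltxx.
Qed.

End Oscillation.

Section Variation.
Variables (R : realType) (A : finPointedType) (phi : Xt A -> R).
Implicit Types (w : seq A) (l : nat).

Definition word_point w : Xt A := fun i => nth point w i.

Lemma cyl_word_point w : cyl w (word_point w).
Proof. exact/cylP. Qed.

Lemma continuous_bounded : continuous phi -> exists M, forall y, `|phi y| <= M.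
Proof.
move=> phi_cont; have [l osc1] := continuous_osc_le phi_cont ltr01.
exists (\sum_(t : l.-tuple A) `|phi (word_point t)| + 1) => y.
pose t : l.-tuple A := [tuple of prefix y l].
have := osc1 _ (size_tuple t) y (word_point t) (cyl_prefix y l) (cyl_word_point t).
have : `|phi (word_point t)| <= \sum_(t : l.-tuple A) `|phi (word_point t)|.
  by rewrite (bigD1 t) //= lerDl sumr_ge0.
have := ler_normD (phi y - phi (word_point t)) (phi (word_point t)).
rewrite subrK; lra.
Qed.

Lemma var_le l e : 0 <= e -> (forall w, size w = l -> osc_le phi e w) -> var l phi <= e.
Proof.
move=> e_ge0 osc; apply: bigmax_le => // t _.
have ne : phi @` cyl t !=set0.
  by exists (phi (word_point t)), (word_point t); first exact: cyl_word_point.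
have sup_le z : cyl t z -> sup (phi @` cyl t) <= phi z + e.
  move=> tz; apply: ge_sup => // _ [y ty <-].
  by have := osc t (size_tuple t) y z ty tz; rewrite ler_norml => /andP[_]; lra.
suff : sup (phi @` cyl t) - e <= inf (phi @` cyl t) by lra.
by apply: lb_le_inf => // _ [z tz <-]; have := sup_le z tz; lra.
Qed.

Lemma var_ge0 l : 0 <= var l phi.
Proof. exact: bigmax_ge_id. Qed.

Lemma var_cvg0 : continuous phi -> (fun l => var l phi) @ \oo --> 0.
Proof.
move=> phi_cont; apply/cvgrPdist_le => e e_gt0.
have [l0 osc0] := continuous_osc_le phi_cont e_gt0.
exists l0 => // l /= le_l0l; rewrite sub0r normrN ger0_norm ?var_ge0 //.
apply: var_le (ltW e_gt0) _ => w sw; apply: (@osc_le_take _ _ _ _ _ l0); apply: osc0.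
by rewrite size_takel // sw.
Qed.

Variable M : R.
Hypothesis phiM : forall y, `|phi y| <= M.

Lemma inf_cyl_le w y : cyl w y -> inf (phi @` cyl w) <= phi y.
Proof.
move=> wy; apply: ge_inf; last by exists y.
by exists (- M) => _ [z _ <-]; move: (phiM z); rewrite ler_norml => /andP[].
Qed.

Lemma le_sup_cyl w y : cyl w y -> phi y <= sup (phi @` cyl w).
Proof.
move=> wy; apply: ub_le_sup; last by exists y.
by exists M => _ [z _ <-]; move: (phiM z); rewrite ler_norml => /andP[].
Qed.

Lemma osc_cyl_le_var w : sup (phi @` cyl w) - inf (phi @` cyl w) <= var (size w) phi.
Proof.
exact: (@le_bigmax _ _ _ _ (fun t : (size w).-tuple A =>
  sup (phi @` cyl (t : seq A)) - inf (phi @` cyl (t : seq A))) (in_tuple w)).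
Qed.

End Variation.

Lemma prod_ratio_shift (R : fieldType) (X F : nat -> R) k : (forall j, F j != 0) ->
  F 0%N * \prod_(0 <= j < k) (X j / F j) = F k * \prod_(0 <= j < k) (X j / F j.+1).
Proof.
move=> F_neq0; elim: k => [|k IHk]; first by rewrite !big_geq.
rewrite !big_nat_recr //= mulrA IHk.
by field; rewrite !F_neq0.
Qed.

Lemma ln_prod (R : realType) (I : Type) (r : seq I) (F : I -> R) :
  (forall i, 0 < F i) -> ln (\prod_(i <- r) F i) = \sum_(i <- r) ln (F i).
Proof.
move=> F_gt0; under eq_bigr do rewrite -[F _]lnK ?posrE //.
by rewrite -expR_sum expRK.
Qed.

Section MarkovApproximation.
Variables (R : realType) (A : finPointedType) (p : seq A -> R).
Hypothesis p_gt0 : forall w, 0 < p w.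

Definition cond_mass (w : seq A) := p w / p (behead w).

Lemma cond_mass_gt0 w : 0 < cond_mass w.
Proof. by rewrite divr_gt0. Qed.

Lemma markov_approx_ratio l (a : seq A) : (l < size a)%N ->
  markov_approx p l a / p a =
  \prod_(0 <= j < size a - l) (cond_mass (take l.+1 (drop j a)) / cond_mass (drop j a)).
Proof.
move=> lt_la; rewrite /markov_approx leqNgt lt_la /=.
set k := (size a - l)%N.
have p_neq0 w : p w != 0 by rewrite gt_eqF.
have beheadE j : behead (drop j a) = drop j.+1 a by rewrite -drop1 drop_drop add1n.
have num : p (take l a) * \prod_(0 <= j < k)
      (p (take l.+1 (drop j a)) / p (take l (drop j a))) =
    p (drop k a) * \prod_(0 <= j < k) cond_mass (take l.+1 (drop j a)).
  have := prod_ratio_shift (fun j => p (take l.+1 (drop j a))) k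
    (fun j => p_neq0 (take l (drop j a))).
  rewrite drop0 => ->; rewrite take_oversize; last by rewrite size_drop /k; lia.
  congr (_ * _).
  by apply: eq_bigr => j _; rewrite /cond_mass -beheadE; case: (drop j a).
have den : p a = p (drop k a) * \prod_(0 <= j < k) cond_mass (drop j a).
  have := prod_ratio_shift (fun j => p (drop j a)) k (fun j => p_neq0 (drop j a)).
  rewrite drop0 big1 ?mulr1 => [->|j _]; last exact: divff.
  by congr (_ * _); apply: eq_bigr => j _; rewrite /cond_mass beheadE.
by rewrite num den -mulf_div divff ?mul1r ?prodf_div.
Qed.

End MarkovApproximation.

Section GMeasure.
Variables (R : realType) (A : finPointedType) (g : Xt A -> R) (mu : probability (XB A) R).
Hypothesis g_fun : g_function g.
Hypothesis mu_g : compatible_g_measure g mu.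

Let mass_pos w : 0 < mass mu w.
Proof. by case: mu_g => _ mu_pos _; exact: mass_gt0. Qed.

Let g_gt0 y : 0 < g y.
Proof. by case: g_fun => _ /(_ y) /andP[]. Qed.

Lemma cond_mass_cvg c (y : Xt A) :
  (fun n => mass mu (c :: prefix y n) / mass mu (prefix y n)) @ \oo --> g (scons c y).
Proof. by case: mu_g => _ _ /(_ (scons c y)); under eq_fun do rewrite prefix_scons. Qed.

Lemma cond_mass_le c v s :
  (forall y, cyl (c :: v) y -> g y <= s) -> cond_mass (mass mu) (c :: v) <= s.
Proof.
move=> gs; rewrite /cond_mass /= ler_pdivrMr //.
apply: (@le_of_ratio_cvg _ _ _ (mass_sum_rcons mu) mass_pos
  (fun b => mass mu (c :: b)) (fun y => g (scons c y))) => [w|y _|y vy].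
- exact: mass_sum_rcons.
- exact: cond_mass_cvg.
- by apply: gs; exact: cyl_scons.
Qed.

Lemma cond_mass_ge c v s :
  (forall y, cyl (c :: v) y -> s <= g y) -> s <= cond_mass (mass mu) (c :: v).
Proof.
move=> gs; rewrite /cond_mass /= ler_pdivlMr //.
apply: (@ge_of_ratio_cvg _ _ _ (mass_sum_rcons mu) mass_pos
  (fun b => mass mu (c :: b)) (fun y => g (scons c y))) => [w|y _|y vy].
- exact: mass_sum_rcons.
- exact: cond_mass_cvg.
- by apply: gs; exact: cyl_scons.
Qed.

Variable M : R.
Hypothesis ln_gM : forall y, `|ln (g y)| <= M.

Lemma ln_cond_mass_bounds (W : seq A) c v : cyl (c :: v) `<=` cyl W ->
  inf ((@ln R \o g) @` cyl W) <= ln (cond_mass (mass mu) (c :: v)) <=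
  sup ((@ln R \o g) @` cyl W).
Proof.
move=> sub_W; have cond_gt0 := cond_mass_gt0 mass_pos (c :: v).
apply/andP; split.
- rewrite -[X in X <= _]expRK ler_ln ?posrE ?expR_gt0 //.
  apply: cond_mass_ge => y /sub_W Wy; rewrite -[g y]lnK ?posrE // ler_expR.
  exact: (inf_cyl_le ln_gM).
- rewrite -[X in _ <= X]expRK ler_ln ?posrE ?expR_gt0 //.
  apply: cond_mass_le => y /sub_W Wy; rewrite -[g y]lnK ?posrE // ler_expR.
  exact: (le_sup_cyl ln_gM).
Qed.

Lemma ln_cond_mass_ratio_le (W : seq A) c v c' v' :
  cyl (c :: v) `<=` cyl W -> cyl (c' :: v') `<=` cyl W ->
  `|ln (cond_mass (mass mu) (c :: v) / cond_mass (mass mu) (c' :: v'))|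
    <= var (size W) (@ln R \o g).
Proof.
move=> sub_W sub_W'; have cond_gt0 := cond_mass_gt0 mass_pos.
rewrite ln_div ?posrE //.
have /andP[lo hi] := ln_cond_mass_bounds sub_W.
have /andP[lo' hi'] := ln_cond_mass_bounds sub_W'.
have osc := osc_cyl_le_var (@ln R \o g) W.
rewrite ler_norml; apply/andP; split; lra.
Qed.

Lemma ln_markov_ratio_le l (a : seq A) :
  `|ln (markov_approx (mass mu) l a / mass mu a)| <= (size a)%:R * var l (@ln R \o g).
Proof.
have var_ge0 := var_ge0 (@ln R \o g) l.
have [le_al|lt_la] := leqP (size a) l.
  by rewrite /markov_approx le_al divff ?gt_eqF // ln1 normr0 mulr_ge0.
rewrite markov_approx_ratio // ln_prod => [|j]; last first.
  by rewrite divr_gt0 ?(cond_mass_gt0 mass_pos).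
apply: le_trans (ler_norm_sum _ _ _) _.
apply: (@le_trans _ _ (\sum_(0 <= j < size a - l) var l (@ln R \o g))).
  apply: ler_sum_nat => j /andP[_ lt_jk].
  have size_drop_gt : (l < size (drop j a))%N by rewrite size_drop; lia.
  have := size_drop_gt; case: (drop j a) => [//|c t] /= lt_l_t.
  have W_le := @ln_cond_mass_ratio_le (take l (c :: t)) c (take l t) c t.
  rewrite size_takel in W_le; last exact: ltnW.
  apply: W_le; last exact: cyl_take.
  have := @cyl_take _ (take l.+1 (c :: t)) l.
  by rewrite take_takel.
rewrite sumr_const_nat subn0 -[_ *+ _]mulr_natl.
by apply: ler_wpM2r => //; rewrite ler_nat leq_subr.
Qed.

End GMeasure.

Lemma rho_ge0 (R : realType) (A : finPointedType) (p q : seq A -> R) : (0 <= rho p q)%E.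
Proof.
apply: le_trans (ereal_sup_ubound _); last by exists [:: point].
by rewrite lee_fin divr_ge0.
Qed.

Theorem theorem3p1 (R : realType) (A : finPointedType) (g : Xt A -> R)
    (mu : probability (XB A) R) :
  g_function g -> continuous g -> compatible_g_measure g mu ->
  (fun l : nat => rho (markov_approx (mass mu) l) (mass mu)) @ \oo --> 0%E /\
  (forall l : nat, (0 < l)%N ->
     (rho (markov_approx (mass mu) l) (mass mu) <= (var l (@ln R \o g))%:E)%E).
Proof.
move=> g_fun g_cont mu_g.
have ln_g_cont : continuous (@ln R \o g).
  move=> x; apply: continuous_comp; first exact: g_cont.
  by case: g_fun => _ /(_ x) /andP[g_gt0 _] _; exact: continuous_ln.
have [M ln_gM] := continuous_bounded ln_g_cont.
have rho_le_var l : (rho (markov_approx (mass mu) l) (mass mu) <= (var l (@ln R \o g))%:E)%E.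
  apply: ge_ereal_sup => _ [a a_gt0 <-].
  rewrite lee_fin ler_pdivrMr ?ltr0n // [X in _ <= X]mulrC.
  by apply: (ln_markov_ratio_le g_fun mu_g (M := M)) => y; exact: ln_gM.
split=> [|l _]; last exact: rho_le_var.
apply: (@squeeze_cvge _ _ _ _ (fun=> 0%E) _ (fun l => (var l (@ln R \o g))%:E)).
- by apply: nearW => l; rewrite rho_ge0 rho_le_var.
- exact: cvg_cst.
- by apply: cvg_EFin; [exact: nearW | exact: var_cvg0].
Qed.
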